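(* Let $r\in(0,1]$, let $x^*$ be a stationary state of the recombinator dynamics with rate $r$, let $d\in D$ and $a_d\in A_d\setminus\operatorname{supp}_d(x^* )$. Write $\hat u(a)=u_{x^*}(a)/u_{x^*}$ and, for $y\in\Delta(\operatorname{supp}_{-d}(x^* ))$, $\hat u(a_d|y)=\sum_{a'_{-d}\in\operatorname{supp}_{-d}(x^* )}\hat u(a_d,a'_{-d})y(a'_{-d})$. Consider the partner dynamics on $\Delta(\operatorname{supp}_{-d}(x^* ))$: $$\dot y(a_{-d})=(1-r)\hat u(a_d,a_{-d})y(a_{-d})+r\,\hat u(a_d|y)\prod_{d'\neq d}x^*(a_{d'})-y(a_{-d})\,\hat u(a_d|y),\qquad a_{-d}\in\operatorname{supp}_{-d}(x^* ).$$ Then its stationary points are exactly the solutions $\eta$ of the stable-partner equation (below), and from every initial condition $y^0\in\Delta(\operatorname{supp}_{-d}(x^* ))$ the trajectory satisfies $y^t\to\eta^{a_d}_{x^*}$ as $t\to\infty$; that is, the stable partner distribution $\eta^{a_d}_{x^*}$ is the unique globally stable equilibrium of the partner dynamics.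
   Context: Setting: $D=\{1,\dots,|D|\}$ finite, $|D|\ge2$; finite trait sets $A_d$; types $A=\prod_dA_d$, $a=(a_d,a_{-d})$, $a_{-d}=(a_{d'})_{d'\neq d}\in\prod_{d'\ne d}A_{d'}$. Payoff $u:A\times A\to\mathbb{R}_{>0}$; for $x\in\Delta(A)$: $u_x(a)=\sum_{a'}x(a')u(a,a')$, $u_x=\sum_ax(a)u_x(a)$, $x(a_d)=\sum_{a_{-d}}x(a_d,a_{-d})$, $x(a_{-d})=\sum_{a_d}x(a_d,a_{-d})$, $\operatorname{supp}_d(x)=\{a_d:x(a_d)>0\}$, $\operatorname{supp}_{-d}(x)=\{a_{-d}:x(a_{-d})>0\}$, trait payoff $u_x(a_d)=\frac1{x(a_d)}\sum_{a_{-d}}x(a_d,a_{-d})u_x(a_d,a_{-d})$ (with $x(a_d)u_x(a_d):=\sum_{a_{-d}}x(a_d,a_{-d})u_x(a_d,a_{-d})$). Recombinator dynamics with rate $r$: $\dot x(a)=(1-r)\frac{x(a)u_x(a)}{u_x}+r\prod_{a_d\in a}\frac{x(a_d)u_x(a_d)}{u_x}-x(a)$; stationary means $\dot x=0$. The stable partner distribution $\eta^{a_d}_{x^*}\in\Delta(\operatorname{supp}_{-d}(x^* ))$ is the unique solution of $\eta(a_{-d})=(1-r)\frac{\eta(a_{-d})u_{x^*}(a_d,a_{-d})}{\sum_{a'_{-d}\in\operatorname{supp}_{-d}(x^* )}\eta(a'_{-d})u_{x^*}(a_d,a'_{-d})}+r\prod_{d'\ne d}x^*(a_{d'})$ for all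 $a_{-d}\in\operatorname{supp}_{-d}(x^* )$. *)

From HB Require Import structures.
From mathcomp Require Import all_boot all_order all_algebra.
From mathcomp Require Import all_classical all_reals all_analysis.
Set Implicit Arguments. Unset Strict Implicit. Unset Printing Implicit Defensive.
Import Order.TTheory GRing.Theory Num.Theory.
Import numFieldNormedType.Exports.
Local Open Scope classical_set_scope.
Local Open Scope ring_scope.

Section Recomb.
Variables (n : nat) (A : 'I_n -> finType) (R : realType).

Definition Prof := {dffun forall d : 'I_n, A d}.
(* partial profiles a_{-d} = (a_{d'})_{d' <> d} *)
Definition Other (d : 'I_n) := {d' : 'I_n | d' != d}.
Definition Rest (d : 'I_n) := {dffun forall d' : Other d, A (val d')}.

Definition restr (d : 'I_n) (a : Prof) : Rest d :=
  [ffun d' : Other d => a (val d')].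

Definition neq_of (d d' : 'I_n) (ne : d <> d') : d' != d :=
  introN eqP (fun h : d' = d => ne (esym h)).

(* the type (a_d, a_{-d}) *)
Definition join (d : 'I_n) (ad : A d) (am : Rest d) : Prof :=
  @finfun _ (fun d' => A d')
    (fun d' => match d =P d' with
               | ReflectT e => eq_rect d A ad d' e
               | ReflectF ne => am (exist _ d' (neq_of ne))
               end).

Variable u : Prof -> Prof -> R.

Definition simplex (x : Prof -> R) := (forall a, 0 <= x a) /\ \sum_a x a = 1.

Definition ux (x : Prof -> R) (a : Prof) : R := \sum_a' x a' * u a a'.
Definition ubar (x : Prof -> R) : R := \sum_a x a * ux x a.
Definition marg (x : Prof -> R) (d : 'I_n) (ad : A d) : R :=
  \sum_(a : Prof | a d == ad) x a.
Definition margm (x : Prof -> R) (d : 'I_n) (am : Rest d) : R :=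
  \sum_(a : Prof | restr d a == am) x a.
(* x(a_d) u_x(a_d) *)
Definition margu (x : Prof -> R) (d : 'I_n) (ad : A d) : R :=
  \sum_(a : Prof | a d == ad) x a * ux x a.

Definition recomb_field (r : R) (x : Prof -> R) (a : Prof) : R :=
  (1 - r) * (x a * ux x a / ubar x)
  + r * \prod_(d : 'I_n) (margu x (a d) / ubar x) - x a.

Definition recomb_stationary (r : R) (x : Prof -> R) :=
  forall a, recomb_field r x a = 0.

Definition suppm (x : Prof -> R) (d : 'I_n) (am : Rest d) : bool :=
  0 < margm x am.

(* y in Delta(supp_{-d}(x)) : only coordinates in supp_{-d}(x) matter *)
Definition psimplex (x : Prof -> R) (d : 'I_n) (y : Rest d -> R) :=
  (forall am, suppm x am -> 0 <= y am) /\
  \sum_(am | suppm x am) y am = 1.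

Definition prodmarg (x : Prof -> R) (d : 'I_n) (am : Rest d) : R :=
  \prod_(d' : Other d) marg x (am d').

Definition stable_partner (r : R) (x : Prof -> R) (d : 'I_n) (ad : A d)
    (eta : Rest d -> R) :=
  psimplex x eta /\
  forall am, suppm x am ->
    eta am = (1 - r) * (eta am * ux x (join ad am) /
               \sum_(am' | suppm x am') eta am' * ux x (join ad am'))
             + r * prodmarg x am.

Definition uhat (x : Prof -> R) (a : Prof) : R := ux x a / ubar x.
Definition uhat_cond (x : Prof -> R) (d : 'I_n) (ad : A d) (y : Rest d -> R) : R :=
  \sum_(am' | suppm x am') uhat x (join ad am') * y am'.

Definition partner_field (r : R) (x : Prof -> R) (d : 'I_n) (ad : A d)
    (y : Rest d -> R) (am : Rest d) : R :=
  (1 - r) * uhat x (join ad am) * y am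
  + r * uhat_cond x ad y * prodmarg x am
  - y am * uhat_cond x ad y.

Definition partner_stationary (r : R) (x : Prof -> R) (d : 'I_n) (ad : A d)
    (y : Rest d -> R) :=
  forall am, suppm x am -> partner_field r x ad y am = 0.

Definition partner_solution (r : R) (x : Prof -> R) (d : 'I_n) (ad : A d)
    (y : R -> Rest d -> R) :=
  forall am, suppm x am ->
    (y s am @[s --> 0^'+] --> y 0 am) /\
    (forall t : R, 0 < t -> is_derive t 1 (fun s => y s am)
                               (partner_field r x ad (y t) am)).

End Recomb.

From HB Require Import structures.
From mathcomp Require Import all_boot all_order all_algebra.
From mathcomp Require Import all_classical all_reals all_analysis.
From mathcomp Require Import ring lra.
Set Implicit Arguments. Unset Strict Implicit. Unset Printing Implicit Defensive.
Import Order.TTheory GRing.Theory Num.Theory.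
Import numFieldNormedType.Exports.
Local Open Scope classical_set_scope.
Local Open Scope ring_scope.

(* Dividing the partner field by [uhat_cond y > 0] turns stationarity into the
   stable-partner equation.  With [b = uhat(a_d, .)] and [p = prod_{d' <> d} x(a_d')]
   on the support, [eta_mu = r p / (1 - mu b)] solves that equation as soon as its
   total mass is 1, and the intermediate value theorem produces such a [mu].
   Along a trajectory the total mass stays 1, since [1 - sum y] solves a scalar
   linear equation; [m = sum_i (b_i eta_i / p_i) y_i] solves [m' = (lambda - U) m],
   with [U = <b, y>] and [lambda = <b, eta>], so it never vanishes; and the ratios
   [q_i = y_i / (eta_i m)] follow a linear consensus dynamics whose weighted
   variance [H] satisfies [H' <= - kap H].  Hence [q] becomes constant and
   [y_i = eta_i q_i / sum_j eta_j q_j] tends to [eta_i].  Uniqueness of [eta]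
   follows by applying the convergence to constant trajectories. *)

Lemma ler_sum_term (R : realType) (I : finType) (P : pred I) (F : I -> R) i0 :
  (forall i, P i -> 0 <= F i) -> P i0 -> F i0 <= \sum_(i | P i) F i.
Proof.
move=> F_ge0 Pi0; rewrite (bigD1 i0) //= lerDl.
by apply: sumr_ge0 => i /andP[Pi _]; exact: F_ge0.
Qed.

Lemma psumr_gt0P (R : realType) (I : finType) (P : pred I) (F : I -> R) :
  (forall i, P i -> 0 <= F i) -> 0 < \sum_(i | P i) F i -> exists2 i, P i & 0 < F i.
Proof.
move=> F_ge0 /lt0r_neq0/eqP/psumr_neq0P [//|i /andP[Pi Fi]].
by exists i.
Qed.

Section scalar_ode.
Variable R : realType.

Lemma is_derive_sum_fun (I : Type) (s : seq I) (P : pred I) (f : I -> R -> R)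
    (df : I -> R) (t : R) :
  (forall i, P i -> is_derive t 1 (f i) (df i)) ->
  is_derive t 1 (fun x => \sum_(i <- s | P i) f i x) (\sum_(i <- s | P i) df i).
Proof.
move=> fd; rewrite -fct_sumE.
by elim/big_ind2: _ => // [|*]; [exact: is_derive_cst | exact: is_deriveD].
Qed.

Lemma cvg_sum_fun (T : Type) (F : set_system T) {FF : Filter F} (I : Type)
    (s : seq I) (P : pred I) (f : I -> T -> R) (a : I -> R) :
  (forall i, P i -> f i x @[x --> F] --> a i) ->
  (\sum_(i <- s | P i) f i x) @[x --> F] --> \sum_(i <- s | P i) a i.
Proof. by move=> fa; apply: cvg_big => //; exact: add_continuous. Qed.

Implicit Types (f c H dH : R -> R) (T k t s xi : R).

Lemma continuous_within_itv0 f T :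
  f x @[x --> 0^'+] --> f 0 -> (forall t, 0 < t -> derivable f t 1) ->
  {within `[0, T], continuous f}.
Proof.
move=> f0 fd; apply: (continuous_subspaceW _ (derivable_oy_Rcontinuous_within_itvcy _)).
  by apply: subset_itvl; rewrite bnd_simp.
by split => // t; rewrite in_itv /= andbT; exact: fd.
Qed.

Lemma bounded_within_itv0 f T : 0 <= T -> {within `[0, T], continuous f} ->
  exists M, forall t, 0 <= t <= T -> `|f t| <= M.
Proof.
move=> T0 fc; have [c1 _ fmax] := EVT_max T0 fc; have [c2 _ fmin] := EVT_min T0 fc.
exists (`|f c1| + `|f c2|) => t tT.
have /fmax h1 : t \in `[0, T] by rewrite in_itv /= tT.
have /fmin h2 : t \in `[0, T] by rewrite in_itv /= tT.
have := ler_norm (f c1); have := ler_norm (- f c2); rewrite normrN => n2 n1.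
have := normr_ge0 (f c1); have := normr_ge0 (f c2) => p2 p1.
by rewrite ler_norml; apply/andP; split; lra.
Qed.

Lemma is_derive_expRM (k t : R) :
  is_derive t 1 (fun s => expR (k * s)) (expR (k * t) * k).
Proof.
have kd : is_derive t 1 (fun s : R => k * s) k.
  by have := is_deriveZ k (@is_derive_id _ _ t 1); rewrite /GRing.scale /= mulr1.
exact: (is_derive1_comp (is_derive_expR (k * t)) kd).
Qed.

Lemma sqr_expR_mvt f c T k : 0 < T ->
  f x @[x --> 0^'+] --> f 0 ->
  (forall t, 0 < t -> is_derive t 1 f (c t * f t)) ->
  exists2 xi, 0 < xi < T &
    f T ^+ 2 * expR (k * T) - f 0 ^+ 2 = f xi ^+ 2 * expR (k * xi) * (k + 2 * c xi) * T.
Proof.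
move=> T0 f0 fd.
pose g t := f t ^+ 2 * expR (k * t).
have gE : g = (f * f) * (fun s => expR (k * s)).
  by apply: funext => s; rewrite /g /= expr2.
have gd (t : R) : 0 < t -> is_derive t 1 g (f t ^+ 2 * expR (k * t) * (k + 2 * c t)).
  move=> t0; rewrite gE.
  apply: is_derive_eq.
    exact: is_deriveM (is_deriveM (fd t t0) (fd t t0)) (is_derive_expRM k t).
  by rewrite /GRing.scale /= (_ : (f * f) t = f t * f t) // expr2; ring.
have gc : {within `[0, T], continuous g}.
  apply: continuous_within_itv0 => // [|t t0]; last by case: (gd t t0).
  rewrite gE; apply: cvgM; first exact: cvgM.
  have /derivable1_diffP/differentiable_continuous : derivable (fun s => expR (k * s)) 0 1.
    by case: (is_derive_expRM k 0).
  exact: cvg_at_right_filter.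
have gd' (t : R) : t \in `]0, T[ -> is_derive t 1 g (f t ^+ 2 * expR (k * t) * (k + 2 * c t)).
  by rewrite in_itv /= => /andP[t0 _]; exact: gd.
have [xi xiT] := MVT T0 gd' gc.
rewrite /g mulr0 expR0 mulr1 subr0 => E.
by exists xi; first by move: xiT; rewrite in_itv.
Qed.

Section linear_ode.
Variables (f c : R -> R) (T M : R).
Hypotheses (T0 : 0 < T) (f0 : f x @[x --> 0^'+] --> f 0).
Hypothesis fd : forall t, 0 < t -> is_derive t 1 f (c t * f t).
Hypothesis cM : forall t, 0 < t < T -> `|c t| <= M.

Lemma linear_ode_eq0 : f 0 = 0 -> f T = 0.
Proof.
move=> f00; have [xi /andP[xi0 xiT]] := sqr_expR_mvt (- (2 * M)) T0 f0 fd.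
rewrite f00 expr0n /= subr0 => E.
have /andP[_ cxi] : - M <= c xi <= M by rewrite -ler_norml cM ?xi0.
have xi_ge0 : 0 <= f xi ^+ 2 * expR (- (2 * M) * xi) by rewrite mulr_ge0 ?sqr_ge0 ?expR_ge0.
have : f T ^+ 2 * expR (- (2 * M) * T) <= 0.
  by rewrite E; apply: mulr_le0_ge0; [apply: mulr_ge0_le0 => //; lra | exact: ltW].
rewrite pmulr_lle0 ?expR_gt0 // => fT.
by apply/eqP; rewrite -sqrf_eq0 eq_le fT sqr_ge0.
Qed.

Lemma linear_ode_neq0 : f 0 != 0 -> f T != 0.
Proof.
move=> f00; have [xi /andP[xi0 xiT] E] := sqr_expR_mvt (2 * M) T0 f0 fd.
have /andP[cxi _] : - M <= c xi <= M by rewrite -ler_norml cM ?xi0.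
have xi_ge0 : 0 <= f xi ^+ 2 * expR (2 * M * xi) by rewrite mulr_ge0 ?sqr_ge0 ?expR_ge0.
have : 0 <= f xi ^+ 2 * expR (2 * M * xi) * (2 * M + 2 * c xi) * T.
  by apply: mulr_ge0; [apply: mulr_ge0 => //; lra | exact: ltW].
have : 0 < f 0 ^+ 2 by rewrite exprn_even_gt0.
move=> f0_gt0 X_ge0; apply/eqP => fT0; move: E; rewrite fT0 expr0n /= mul0r; lra.
Qed.

End linear_ode.

Lemma derive_le0_nonincr H dH : (forall t, 0 < t -> is_derive t 1 H (dH t)) ->
  (forall t, 0 < t -> dH t <= 0) -> forall s t, 0 < s -> s <= t -> H t <= H s.
Proof.
move=> Hd dH0 s t s0 st.
have Hd' (x : R) : x \in `]s, t[ -> is_derive x 1 H (dH x).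
  by rewrite in_itv /= => /andP[sx _]; apply: Hd; exact: lt_trans sx.
have Hc : {within `[s, t], continuous H}.
  apply: derivable_within_continuous => x; rewrite in_itv /= => /andP[sx _].
  by case: (Hd x (lt_le_trans s0 sx)).
have [x sxt E] := MVT_segment st Hd' Hc.
have x0 : 0 < x by move: sxt; rewrite in_itv /= => /andP[sx _]; exact: lt_le_trans sx.
rewrite -subr_le0 E; apply: mulr_le0_ge0; [exact: dH0 | lra].
Qed.

(* [H' <= - kap H] forces the decay; on [[1, T]] with [T = 1 + H 1 / (kap e)]
   the mean value theorem rules out [H >= e] all along. *)
Lemma lyapunov_cvg0 H dH kap : 0 < kap ->
  (forall t, 0 < t -> is_derive t 1 H (dH t)) ->
  (forall t, 0 < t -> dH t <= - (kap * H t)) ->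
  (forall t, 0 < t -> 0 <= H t) ->
  H t @[t --> +oo] --> 0.
Proof.
move=> kap0 Hd HdH H0.
have dH_le0 t : 0 < t -> dH t <= 0.
  by move=> t0; apply: le_trans (HdH t t0) _; rewrite oppr_le0 mulr_ge0 ?H0 // ltW.
have Hnincr := derive_le0_nonincr Hd dH_le0.
apply/cvgrPdist_lt => e e0.
have ke : 0 < kap * e by rewrite mulr_gt0.
pose T := 1 + H 1 / (kap * e).
have T1 : 1 <= T by rewrite /T lerDl divr_ge0 // ?H0 // ltW.
have HT : H T < e.
  rewrite ltNge; apply/negP => HTe.
  have Hd' (x : R) : x \in `]1, T[ -> is_derive x 1 H (dH x).
    by rewrite in_itv /= => /andP[x1 _]; apply: Hd; lra.
  have Hc : {within `[1, T], continuous H}.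
    apply: derivable_within_continuous => x; rewrite in_itv /= => /andP[x1 _].
    by case: (Hd x (lt_le_trans ltr01 x1)).
  have [x] := MVT_segment T1 Hd' Hc; rewrite in_itv /= => /andP[x1 xT] E.
  have x0 : 0 < x by lra.
  have dHx : dH x <= - (kap * e) by have := HdH x x0; have := Hnincr x T x0 xT; nra.
  have : dH x * (T - 1) <= - (kap * e) * (T - 1) by rewrite ler_wpM2r // subr_ge0.
  have -> : - (kap * e) * (T - 1) = - H 1.
    by rewrite /T addrAC subrr add0r mulNr mulrC divfK // gt_eqF.
  have := H0 T (lt_le_trans ltr01 T1); lra.
exists T; split; first by rewrite num_real.
move=> t Tt; rewrite sub0r normrN ger0_norm; last by apply: H0; lra.
by apply: le_lt_trans HT; apply: Hnincr => //; lra.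
Qed.

Lemma cvg_sqr_dominated (g h : R -> R) (a : R) :
  h t @[t --> +oo] --> 0 -> (forall t, 0 < t -> (g t - a) ^+ 2 <= h t) ->
  g t @[t --> +oo] --> a.
Proof.
move=> /cvgrPdist_lt h0 gh; apply/cvgrPdist_lt => e e0.
near=> t.
have t0 : 0 < t by near: t; apply: nbhs_pinfty_gt; rewrite num_real.
have := gh t t0; have : `|0 - h t| < e ^+ 2 by near: t; exact: h0 (exprn_gt0 _ e0).
rewrite sub0r normrN => ht gt; have hn := ler_norm (h t).
rewrite ltr_norml; apply/andP; split; nra.
Unshelve. all: by end_near.
Qed.

End scalar_ode.

Section consensus_identities.
Variables (R : realType) (I : finType) (P : pred I).

Lemma sum_consensus_sqr (s q : I -> R) (k : R) :
  \sum_(i | P i) s i * (q i - k) * (\sum_(j | P j) s j * (q j - q i)) * 2 =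
  - \sum_(i | P i) \sum_(j | P j) s i * s j * (q i - q j) ^+ 2.
Proof.
pose a i j := s i * s j * (q i - k) * (q j - q i).
have -> : \sum_(i | P i) s i * (q i - k) * (\sum_(j | P j) s j * (q j - q i)) * 2 =
    \sum_(i | P i) \sum_(j | P j) a i j + \sum_(i | P i) \sum_(j | P j) a i j.
  rewrite -big_split /=; apply: eq_bigr => i _.
  by rewrite -big_split /= mulr_sumr mulr_suml; apply: eq_bigr => j _; rewrite /a; ring.
rewrite [X in _ + X]exchange_big /= -big_split /= -sumrN; apply: eq_bigr => i _.
by rewrite -big_split /= -sumrN; apply: eq_bigr => j _; rewrite /a; ring.
Qed.

Lemma sum_pairwise_sqr (w z : I -> R) :
  \sum_(i | P i) w i * z i = 0 ->
  \sum_(i | P i) \sum_(j | P j) w i * w j * (z i - z j) ^+ 2 =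
  2 * (\sum_(i | P i) w i) * \sum_(i | P i) w i * z i ^+ 2.
Proof.
move=> wz0; set c := \sum_(i | P i) w i; set Q := \sum_(i | P i) w i * z i ^+ 2.
have inner i : \sum_(j | P j) w i * w j * (z i - z j) ^+ 2 = c * (w i * z i ^+ 2) + Q * w i.
  rewrite (eq_bigr (fun j => w i * z i ^+ 2 * w j + w i * (w j * z j ^+ 2)
                - 2 * w i * z i * (w j * z j))); last by move=> j _; ring.
  by rewrite sumrB big_split /= -!mulr_sumr wz0 -/c -/Q; ring.
by rewrite (eq_bigr _ (fun i _ => inner i)) big_split /= -!mulr_sumr -/c -/Q; ring.
Qed.

End consensus_identities.

Section linear_partner_dynamics.
Variables (R : realType) (I : finType) (P : pred I) (b p : I -> R) (r mu : R).
Hypotheses (r_gt0 : 0 < r) (b_gt0 : forall i, P i -> 0 < b i).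
Hypotheses (p_gt0 : forall i, P i -> 0 < p i) (p_sum1 : \sum_(i | P i) p i = 1).
Hypothesis mub_lt1 : forall i, P i -> mu * b i < 1.

Definition eta_mu i := r * p i / (1 - mu * b i).
Definition lambda_mu := \sum_(i | P i) b i * eta_mu i.

Hypothesis eta_sum1 : \sum_(i | P i) eta_mu i = 1.

Lemma eta_gt0 i : P i -> 0 < eta_mu i.
Proof. by move=> Pi; rewrite divr_gt0 ?mulr_gt0 ?p_gt0 // subr_gt0 mub_lt1. Qed.

Lemma eta_neq0 i : P i -> eta_mu i != 0.
Proof. by move=> Pi; rewrite gt_eqF ?eta_gt0. Qed.

Lemma eta_eq i : P i -> eta_mu i * (1 - mu * b i) = r * p i.
Proof. by move=> Pi; rewrite mulfVK // gt_eqF // subr_gt0 mub_lt1. Qed.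

Lemma exists_P : exists i, P i.
Proof.
have [i Pi | P0] := pickP P; first by exists i.
by move: p_sum1; rewrite big_pred0 // => /eqP; rewrite eq_sym oner_eq0.
Qed.

Lemma psum_gt0 (F : I -> R) : (forall i, P i -> 0 < F i) -> 0 < \sum_(i | P i) F i.
Proof.
move=> F_gt0; have [i Pi] := exists_P.
apply: (lt_le_trans (F_gt0 i Pi)); apply: ler_sum_term Pi => j Pj.
exact/ltW/F_gt0.
Qed.

Lemma lambda_gt0 : 0 < lambda_mu.
Proof. by apply: psum_gt0 => i Pi; rewrite mulr_gt0 ?b_gt0 ?eta_gt0. Qed.

Lemma mu_lambda : mu * lambda_mu = 1 - r.
Proof.
have : \sum_(i | P i) eta_mu i * (1 - mu * b i) = r.
  by rewrite (eq_bigr _ eta_eq) -mulr_sumr p_sum1 mulr1.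
have -> : \sum_(i | P i) eta_mu i * (1 - mu * b i) = \sum_(i | P i) eta_mu i - mu * lambda_mu.
  by rewrite /lambda_mu mulr_sumr -sumrB; apply: eq_bigr => i _; ring.
rewrite eta_sum1; lra.
Qed.

(* [eta_mu] is the Perron eigenvector of [(1 - r) diag b + r p b^T]. *)
Lemma eta_eigen i : P i -> lambda_mu * eta_mu i - (1 - r) * b i * eta_mu i = r * p i * lambda_mu.
Proof. by move=> Pi; rewrite -(eta_eq Pi) -mu_lambda; ring. Qed.

Variable y : R -> I -> R.
Implicit Types (s t z T M : R).
Let U t := \sum_(j | P j) b j * y t j.
Let F t i := (1 - r) * b i * y t i + r * U t * p i - y t i * U t.

Hypothesis y_rc : forall i, P i -> y s i @[s --> 0^'+] --> y 0 i.
Hypothesis y_der : forall i, P i -> forall t : R, 0 < t ->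
  is_derive t 1 (fun s => y s i) (F t i).
Hypotheses (y0_ge0 : forall i, P i -> 0 <= y 0 i) (y0_sum1 : \sum_(i | P i) y 0 i = 1).

Lemma weighted_sum_rc (c : I -> R) :
  (\sum_(j | P j) c j * y s j) @[s --> 0^'+] --> \sum_(j | P j) c j * y 0 j.
Proof. by apply: cvg_sum_fun => j Pj; exact: cvgMl_tmp (y_rc Pj). Qed.

Lemma is_derive_weighted_sum (c : I -> R) t : 0 < t ->
  is_derive t 1 (fun s => \sum_(j | P j) c j * y s j) (\sum_(j | P j) c j * F t j).
Proof. by move=> t0; apply: is_derive_sum_fun => j Pj; exact: is_deriveZ (y_der Pj t0). Qed.

Lemma U_bounded T : 0 < T -> exists M, forall t, 0 < t < T -> `|U t| <= M.
Proof.
move=> T0; have [|M UM] := @bounded_within_itv0 _ U T (ltW T0).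
  apply: continuous_within_itv0 => [|t t0]; first exact: weighted_sum_rc.
  by case: (is_derive_weighted_sum b t0).
by exists M => t /andP[t0 tT]; apply: UM; rewrite !ltW.
Qed.

Lemma y_sum1 t : 0 < t -> \sum_(j | P j) y t j = 1.
Proof.
move=> t0; pose f s := 1 - \sum_(j | P j) y s j.
have frc : f x @[x --> 0^'+] --> f 0.
  by apply: cvgB; [exact: cvg_cst | apply: cvg_sum_fun => j Pj; exact: y_rc].
have fd z : 0 < z -> is_derive z 1 f (- U z * f z).
  move=> z0; have := is_deriveB (is_derive_cst (1 : R) z 1)
    (@is_derive_sum_fun _ _ (index_enum I) P (fun j s => y s j) (F z) z (fun j Pj => y_der Pj z0)).
  rewrite (_ : _ - _ = f) // => hf; apply: (is_derive_eq hf).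
  rewrite /f (eq_bigr (fun j => (1 - r) * (b j * y z j) + r * U z * p j - U z * y z j));
    last by move=> j _; rewrite /F; ring.
  by rewrite sumrB big_split /= -!mulr_sumr p_sum1 -/(U z); ring.
have [M UM] := U_bounded t0.
have UM' s : 0 < s < t -> `|- U s| <= M by rewrite normrN; exact: UM.
have : f t = 0 by apply: (linear_ode_eq0 t0 frc fd UM'); rewrite /f y0_sum1 subrr.
by move/eqP; rewrite subr_eq0 eq_sym => /eqP.
Qed.

Let v i := b i * eta_mu i / p i.
Let m t := \sum_(j | P j) v j * y t j.

Lemma v_gt0 i : P i -> 0 < v i.
Proof.
by move=> Pi; apply: divr_gt0; [apply: mulr_gt0; [exact: b_gt0 | exact: eta_gt0] | exact: p_gt0].
Qed.

(* [v] is a left eigenvector of the linear part, so [m' = (lambda_mu - U) m]. *)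
Lemma is_derive_m t : 0 < t -> is_derive t 1 m ((lambda_mu - U t) * m t).
Proof.
move=> t0; apply: (is_derive_eq (is_derive_weighted_sum v t0)).
have vF j : P j -> v j * F t j = lambda_mu * (v j * y t j) - r * lambda_mu * (b j * y t j)
    + r * U t * (b j * eta_mu j) - U t * (v j * y t j).
  move=> Pj; apply/eqP; rewrite -subr_eq0; apply/eqP.
  transitivity (b j * y t j / p j *
    (r * p j * lambda_mu - (lambda_mu * eta_mu j - (1 - r) * b j * eta_mu j))).
    by rewrite /v /F; field; rewrite gt_eqF ?p_gt0.
  by rewrite eta_eigen // subrr mulr0.
rewrite (eq_bigr _ vF) !sumrB !big_split /= -!mulr_sumr sumrN -mulr_sumr.
by rewrite -/(m t) -/(U t) -/lambda_mu; ring.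
Qed.

Lemma m_neq0 t : 0 < t -> m t != 0.
Proof.
move=> t0; have [M UM] := U_bounded t0.
have cM s : 0 < s < t -> `|lambda_mu - U s| <= lambda_mu + M.
  move=> st; apply: le_trans (ler_normB _ _) _.
  by rewrite ger0_norm ?lerD2l ?UM // ltW // lambda_gt0.
apply: (linear_ode_neq0 t0 (@weighted_sum_rc v) is_derive_m cM).
apply/eqP => m0.
have y00 j : P j -> y 0 j = 0.
  move=> Pj; have := psumr_eq0P (fun i Pi => mulr_ge0 (ltW (v_gt0 Pi)) (y0_ge0 Pi)) m0 Pj.
  by move/eqP; rewrite mulf_eq0 gt_eqF ?v_gt0 //= => /eqP.
by move: y0_sum1; rewrite big1 // => /eqP; rewrite eq_sym oner_eq0.
Qed.

(* [q_i' = (r p_i / eta_i) sum_j b_j eta_j (q_j - q_i)]; the [w]-mean of [q] is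
   constantly [c0^-1], and [H] is the [w]-variance of [q]. *)
Let q t i := y t i / (eta_mu i * m t).
Let w i := v i * eta_mu i.
Let c0 := \sum_(i | P i) w i.
Let H t := \sum_(i | P i) w i * (q t i - c0^-1) ^+ 2.
Let sv i := b i * eta_mu i.
Let g i := eta_mu i / p i.

Lemma w_gt0 i : P i -> 0 < w i.
Proof. by move=> Pi; rewrite /w mulr_gt0 ?v_gt0 ?eta_gt0. Qed.

Lemma c0_gt0 : 0 < c0.
Proof. exact: psum_gt0 w_gt0. Qed.

Lemma is_derive_q i t : P i -> 0 < t ->
  is_derive t 1 (fun s => q s i) (r * p i / eta_mu i * (U t / m t - lambda_mu * q t i)).
Proof.
move=> Pi t0; have mt := m_neq0 t0; have ei := eta_neq0 Pi.
have emt : eta_mu i * m t != 0 by rewrite mulf_neq0.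
have := is_deriveM (y_der Pi t0)
  (@is_deriveV _ (fun s => eta_mu i * m s) t _ 1 emt (is_deriveZ (eta_mu i) (is_derive_m t0))).
move/is_derive_eq; apply.
have pE : p i = eta_mu i * (lambda_mu - (1 - r) * b i) / (r * lambda_mu).
  apply: (@mulIf _ (r * lambda_mu)); first by rewrite mulf_neq0 ?gt_eqF ?lambda_gt0.
  by rewrite divfK ?mulf_neq0 ?gt_eqF ?lambda_gt0 //; have := eta_eigen Pi; lra.
rewrite /GRing.scale /= /F /q pE; field.
by rewrite ei mt !gt_eqF ?lambda_gt0.
Qed.

Lemma sum_sv_consensus t i : P i -> 0 < t ->
  \sum_(j | P j) sv j * (q t j - q t i) = U t / m t - lambda_mu * q t i.
Proof.
move=> Pi t0; rewrite (eq_bigr (fun j => b j * y t j * (m t)^-1 - sv j * q t i)).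
  by rewrite sumrB -!mulr_suml.
by move=> j Pj; rewrite /sv /q; field; rewrite m_neq0 // !eta_neq0.
Qed.

Lemma is_derive_H t : 0 < t ->
  is_derive t 1 H (- (r * \sum_(i | P i) \sum_(j | P j) sv i * sv j * (q t i - q t j) ^+ 2)).
Proof.
move=> t0; apply: (is_derive_eq (@is_derive_sum_fun _ _ _ P
  (fun i s => w i * (q s i - c0^-1) ^+ 2)
  (fun i => w i * (2 * (q t i - c0^-1) *
     (r * p i / eta_mu i * (U t / m t - lambda_mu * q t i)))) t _)).
  move=> i Pi; have := is_deriveZ (w i)
    (is_deriveX 2 (is_deriveB (is_derive_q Pi t0) (is_derive_cst c0^-1 t 1))).
  rewrite (_ : _ \*: _ = fun s => w i * (q s i - c0^-1) ^+ 2); last first.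
    by apply: funext => s; rewrite !fctE.
  by move/is_derive_eq; apply; rewrite /GRing.scale /= ?fctE; ring.
rewrite -mulrN -(sum_consensus_sqr P sv (q t) c0^-1) mulr_sumr.
apply: eq_bigr => i Pi; rewrite sum_sv_consensus // /w /v /sv; field.
by rewrite m_neq0 // gt_eqF ?c0_gt0 // eta_neq0 // gt_eqF ?p_gt0.
Qed.

Lemma w_mean_q t : 0 < t -> \sum_(i | P i) w i * (q t i - c0^-1) = 0.
Proof.
move=> t0; rewrite (eq_bigr (fun i => v i * y t i * (m t)^-1 - w i * c0^-1)).
  by rewrite sumrB -!mulr_suml mulfV ?m_neq0 // mulfV ?subrr // gt_eqF ?c0_gt0.
by move=> i Pi; rewrite /w /q; field; rewrite gt_eqF ?c0_gt0 // m_neq0 // eta_neq0.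
Qed.

Lemma H_pairwise t : 0 < t ->
  2 * c0 * H t = \sum_(i | P i) \sum_(j | P j) w i * w j * (q t i - q t j) ^+ 2.
Proof.
move=> t0; rewrite /H -(sum_pairwise_sqr (w_mean_q t0)).
by apply: eq_bigr => i _; apply: eq_bigr => j _; congr (_ * _); congr (_ ^+ _); ring.
Qed.

Let rho := (\sum_(i | P i) g i)^-1.
Let kap := r * rho ^+ 2 * (2 * c0).

Lemma g_gt0 i : P i -> 0 < g i.
Proof. by move=> Pi; rewrite divr_gt0 ?eta_gt0 ?p_gt0. Qed.

Lemma rho_gt0 : 0 < rho.
Proof. by rewrite invr_gt0 psum_gt0 //; exact: g_gt0. Qed.

Lemma rho_g_le1 i : P i -> rho * g i <= 1.
Proof.
move=> Pi; rewrite ler_pdivrMl ?psum_gt0 // ?mulr1; last exact: g_gt0.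
by apply: ler_sum_term => // j /g_gt0/ltW.
Qed.

Lemma kap_H_le t : 0 < t ->
  kap * H t <= r * \sum_(i | P i) \sum_(j | P j) sv i * sv j * (q t i - q t j) ^+ 2.
Proof.
move=> t0; have -> : kap * H t = r * (rho ^+ 2 * (2 * c0 * H t)) by rewrite /kap; ring.
rewrite H_pairwise // ler_pM2l // mulr_sumr ler_sum // => i Pi.
rewrite mulr_sumr ler_sum // => j Pj.
have gi0 : 0 <= rho * g i by rewrite mulr_ge0 ?ltW ?rho_gt0 ?g_gt0.
have gj0 : 0 <= rho * g j by rewrite mulr_ge0 ?ltW ?rho_gt0 ?g_gt0.
have -> : rho ^+ 2 * (w i * w j * (q t i - q t j) ^+ 2) =
    (rho * g i) * (rho * g j) * (sv i * sv j * (q t i - q t j) ^+ 2).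
  by rewrite /w /v /sv /g; field; rewrite !gt_eqF ?p_gt0.
apply: ler_piMl; last by rewrite mulr_ile1 ?rho_g_le1.
by rewrite mulr_ge0 ?sqr_ge0 // mulr_ge0 // ltW // mulr_gt0 ?b_gt0 ?eta_gt0.
Qed.

Lemma H_cvg0 : H t @[t --> +oo] --> 0.
Proof.
have kap_gt0 : 0 < kap by rewrite /kap !mulr_gt0 ?exprn_gt0 ?rho_gt0 ?c0_gt0 ?ltr0n.
apply: (lyapunov_cvg0 kap_gt0 is_derive_H) => [t t0|t _].
  by rewrite lerN2; exact: kap_H_le.
by apply: sumr_ge0 => j Pj; rewrite mulr_ge0 ?sqr_ge0 // ltW ?w_gt0.
Qed.

Lemma q_cvg i : P i -> q t i @[t --> +oo] --> c0^-1.
Proof.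
move=> Pi; apply: (@cvg_sqr_dominated _ _ (fun t => H t / w i)).
  by rewrite -(mul0r (w i)^-1); exact: cvgMr_tmp H_cvg0.
move=> t t0; rewrite ler_pdivlMr ?w_gt0 // mulrC /H.
apply: (ler_sum_term _ Pi) => j Pj.
by rewrite mulr_ge0 ?sqr_ge0 // ltW ?w_gt0.
Qed.

Lemma partner_dynamics_cvg i : P i -> y t i @[t --> +oo] --> eta_mu i.
Proof.
move=> Pi; have c0_neq0 : c0^-1 != 0 by rewrite invr_eq0 gt_eqF ?c0_gt0.
have den : (\sum_(j | P j) eta_mu j * q t j) @[t --> +oo] --> c0^-1.
  have := @cvg_sum_fun _ _ _ _ _ (index_enum I) P (fun j t => eta_mu j * q t j)
    (fun j => eta_mu j * c0^-1) (fun j Pj => cvgMl_tmp (q_cvg Pj)).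
  by rewrite -mulr_suml eta_sum1 mul1r => h; exact: h.
have lim : (eta_mu i * q t i / \sum_(j | P j) eta_mu j * q t j) @[t --> +oo] --> eta_mu i.
  have := cvgM (cvgMl_tmp (a := eta_mu i) (q_cvg Pi)) (cvgV c0_neq0 den).
  by rewrite mulfK // => h; exact: h.
apply: (cvg_trans _ lim); apply: near_eq_cvg; near=> t.
have t0 : 0 < t by near: t; apply: nbhs_pinfty_gt; rewrite num_real.
have mt := m_neq0 t0.
have -> : \sum_(j | P j) eta_mu j * q t j = (m t)^-1.
  rewrite (eq_bigr (fun j => y t j * (m t)^-1)); first by rewrite -mulr_suml y_sum1 // mul1r.
  by move=> j Pj; rewrite /q; field; rewrite mt eta_neq0.
by rewrite /= invrK /q; field; rewrite mt eta_neq0.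
Unshelve. all: by end_near.
Qed.

End linear_partner_dynamics.

Section intermediate_value.
Variables (R : realType) (I : finType) (P : pred I) (b p : I -> R) (r : R).
Hypotheses (r_gt0 : 0 < r) (r_le1 : r <= 1) (b_gt0 : forall i, P i -> 0 < b i).
Hypotheses (p_gt0 : forall i, P i -> 0 < p i) (p_sum1 : \sum_(i | P i) p i = 1).

(* [mu |-> sum_i r p_i / (1 - mu b_i)] equals [r <= 1] at [0] and is at least [1]
   at [mu1 = (1 - r p_k) / b_k], with [k] maximizing [b]. *)
Lemma exists_mu_eta_sum1 : exists mu : R, (forall i, P i -> mu * b i < 1) /\
  \sum_(i | P i) r * p i / (1 - mu * b i) = 1.
Proof.
have [i0 Pi0 _] : exists2 i, P i & 0 < p i.
  by apply: psumr_gt0P => [i /p_gt0/ltW //|]; rewrite p_sum1 ltr01.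
have [k Pk b_max] := arg_maxP b Pi0.
have bk_gt0 := b_gt0 Pk; have pk_gt0 := p_gt0 Pk.
have pk_le1 : p k <= 1 by rewrite -p_sum1; apply: ler_sum_term => // i /p_gt0/ltW.
have rpk_le1 : r * p k <= 1 by rewrite -[1]mul1r ler_pM // ltW.
have rpk_gt0 : 0 < r * p k by rewrite mulr_gt0.
pose mu1 := (1 - r * p k) / b k.
have mu1_ge0 : 0 <= mu1 by rewrite divr_ge0 ?subr_ge0 // ltW.
have mu1b : mu1 * b k = 1 - r * p k by rewrite divfK // gt_eqF.
have mub_le m i : 0 <= m <= mu1 -> P i -> m * b i <= 1 - r * p k.
  move=> /andP[m0 m1] Pi; rewrite -mu1b; apply: le_trans (_ : mu1 * b i <= _).
    by rewrite ler_wpM2r // ltW ?b_gt0.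
  by rewrite ler_wpM2l //; exact: b_max.
pose g m := \sum_(i | P i) r * p i / (1 - m * b i).
have gc : {within `[0, mu1], continuous g}.
  apply: continuous_in_subspaceT => m; rewrite inE /= in_itv /= => mmu1.
  apply: cvg_sum_fun => i Pi; apply: cvgMl_tmp; apply: cvgV.
    by rewrite gt_eqF // subr_gt0; apply: le_lt_trans (mub_le m i mmu1 Pi) _; lra.
  by apply: cvgB; [exact: cvg_cst | apply: cvgMr_tmp; exact: cvg_id].
have g0 : g 0 = r.
  rewrite /g (eq_bigr (fun i => r * p i)) => [|i _]; last by rewrite mul0r subr0 divr1.
  by rewrite -mulr_sumr p_sum1 mulr1.
have g_mu1 : 1 <= g mu1.
  have <- : r * p k / (1 - mu1 * b k) = 1 by rewrite mu1b opprB addrC subrK divff ?gt_eqF.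
  apply: (ler_sum_term _ Pk) => i Pi; rewrite divr_ge0 ?mulr_ge0 ?ltW ?p_gt0 //.
  by have := mub_le mu1 i; rewrite mu1_ge0 lexx => /(_ isT Pi); lra.
have [mu] : exists2 mu, mu \in `[0, mu1] & g mu = 1.
  by apply: IVT => //; rewrite ge_min g0 r_le1 /= le_max g_mu1 orbT.
rewrite in_itv /= => mmu1 gmu; exists mu; split => // i Pi.
by apply: le_lt_trans (mub_le mu i mmu1 Pi) _; lra.
Qed.

End intermediate_value.

Lemma sum_dffun_prod (R : realType) (I : finType) (J : I -> finType)
    (F : forall i, J i -> R) :
  \sum_(f : {dffun forall i, J i}) \prod_i F i (f i) = \prod_i \sum_(j : J i) F i j.
Proof.
pose T := {i : I & J i}; pose G (t : T) := F (tag t) (tagged t).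
have sumE i : \sum_(j : J i) F i j = \sum_(t : T | tag t == i) G t.
  have inj : {in [set: J i]%SET &, injective (fun j : J i => Tagged J j : T)}.
    by move=> j1 j2 _ _; exact: eq_from_Tagged.
  rewrite (eq_bigl (mem ((fun j : J i => Tagged J j : T) @: [set: J i]%SET))).
    by rewrite big_imset //=; apply: eq_bigl => j; rewrite inE.
  move=> t; rewrite -[mem _ t]/(t \in _); apply/eqP/imsetP => [e|[j _ ->] //].
  by exists (etagged e); rewrite ?inE // etaggedK.
rewrite (eq_bigr _ (fun i _ => sumE i)) bigA_distr_big_dep.
pose h (f : {dffun forall i, J i}) : {ffun I -> T} := [ffun i => Tagged J (f i)].
have inj : {in [set: {dffun forall i, J i}]%SET &, injective h}.
  move=> f1 f2 _ _ e; apply/ffunP => i.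
  by have := congr1 (fun g : {ffun I -> T} => g i) e; rewrite !ffunE; exact: eq_from_Tagged.
rewrite (eq_bigl (mem (h @: [set: {dffun forall i, J i}]%SET))); last first.
  move=> g /=; apply/familyP/imsetP => [tagE|[f _ ->] i]; last by rewrite ffunE /in_mem /=.
  have tagE' i : tag (g i) = i by have := tagE i; rewrite /in_mem /= => /eqP.
  exists (finfun (fun i => etagged (tagE' i))); first by rewrite inE.
  by apply/ffunP => i; rewrite !ffunE etaggedK.
rewrite big_imset //=; apply: eq_big => [f|f _]; first by rewrite inE.
by apply: eq_bigr => i _; rewrite ffunE.
Qed.

Section join.
Variables (n : nat) (A : 'I_n -> finType) (d : 'I_n).

Lemma join_d (ad : A d) (am : Rest A d) : join ad am d = ad.
Proof.
rewrite /join ffunE; case: (d =P d) => [e|//].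
by rewrite (eq_irrelevance e erefl).
Qed.

Lemma join_neq (ad : A d) (am : Rest A d) (d' : 'I_n) (h : d' != d) :
  join ad am d' = am (exist _ d' h).
Proof.
rewrite /join ffunE; case: (d =P d') => [e|ne]; first by exfalso; move: h; rewrite -e eqxx.
by rewrite (eq_irrelevance (neq_of ne) h).
Qed.

Lemma restr_join (ad : A d) (am : Rest A d) : restr d (join ad am) = am.
Proof. by apply/ffunP => -[d' h]; rewrite ffunE; exact: join_neq. Qed.

End join.

Section recombinator_partners.
Variables (n : nat) (A : 'I_n -> finType) (R : realType).
Variables (u : Prof A -> Prof A -> R) (r : R) (x : Prof A -> R) (d : 'I_n) (ad : A d).
Hypotheses (u_gt0 : forall a a', 0 < u a a') (r_gt0 : 0 < r) (r_le1 : r <= 1).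
Hypotheses (x_simplex : simplex x) (x_stat : recomb_stationary u r x).

Let P := @suppm n A R x d.
Let b (am : Rest A d) := uhat u x (join ad am).
Let p (am : Rest A d) := prodmarg x am.

Lemma x_ge0 a : 0 <= x a. Proof. by case: x_simplex. Qed.

Lemma exists_x_gt0 : exists a, 0 < x a.
Proof.
have [a _ xa] : exists2 a, predT a & 0 < x a.
  by apply: psumr_gt0P => [a _|]; [exact: x_ge0 | case: x_simplex => _ ->; exact: ltr01].
by exists a.
Qed.

Lemma ux_gt0 a : 0 < ux u x a.
Proof.
have [a' xa'] := exists_x_gt0; apply: (lt_le_trans (mulr_gt0 xa' (u_gt0 a a'))).
by apply: (ler_sum_term _ (isT : predT a')) => c _; rewrite mulr_ge0 ?x_ge0 // ltW.
Qed.

Lemma ubar_gt0 : 0 < ubar u x.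
Proof.
have [a xa] := exists_x_gt0; apply: (lt_le_trans (mulr_gt0 xa (ux_gt0 a))).
by apply: (ler_sum_term _ (isT : predT a)) => c _; rewrite mulr_ge0 ?x_ge0 // ltW ?ux_gt0.
Qed.

Lemma b_gt0 am : 0 < b am.
Proof. by rewrite /b /uhat divr_gt0 ?ux_gt0 ?ubar_gt0. Qed.

Lemma marg_ge0 d' (c : A d') : 0 <= marg x c.
Proof. by apply: sumr_ge0 => a _; exact: x_ge0. Qed.

Lemma marg_sum1 d' : \sum_(c : A d') marg x c = 1.
Proof. by case: x_simplex => _ <-; rewrite (partition_big (fun a : Prof A => a d') xpredT). Qed.

Lemma margu_gt0 d' (c : A d') : 0 < marg x c -> 0 < margu u x c.
Proof.
move=> /psumr_gt0P [a _|a ac xa]; first exact: x_ge0.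
apply: (lt_le_trans (mulr_gt0 xa (ux_gt0 a))).
rewrite /margu (bigD1 a) //= lerDl; apply: sumr_ge0 => a' _.
by rewrite mulr_ge0 ?x_ge0 // ltW ?ux_gt0.
Qed.

Lemma prodmarg_ge0 (am : Rest A d) : 0 <= p am.
Proof. by apply: prodr_ge0 => d' _; exact: marg_ge0. Qed.

Lemma prodmarg_sum1 : \sum_(am : Rest A d) p am = 1.
Proof.
rewrite /p /prodmarg (sum_dffun_prod (fun d' : Other d => fun c : A (val d') => marg x c)).
by apply: big1 => d' _; exact: marg_sum1.
Qed.

Lemma suppm_prodmarg_gt0 (am : Rest A d) : P am -> 0 < p am.
Proof.
move=> /psumr_gt0P [a _|a /eqP <- xa]; first exact: x_ge0.
apply: prodr_gt0 => d' _; apply: (lt_le_trans xa); rewrite ffunE.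
by rewrite /marg (bigD1 a) //= lerDl; apply: sumr_ge0 => a' _; exact: x_ge0.
Qed.

(* If every marginal of [am] is positive, recombination produces the type
   [join c am] at a positive rate, so stationarity puts it in the support. *)
Lemma prodmarg_gt0_suppm (am : Rest A d) : 0 < p am -> P am.
Proof.
move=> pam; have marg_gt0 d' : 0 < marg x (am d').
  rewrite lt0r marg_ge0 andbT; apply/eqP => m0; move: pam.
  by rewrite /p /prodmarg (bigD1 d') //= m0 mul0r ltxx.
have [c _ c_gt0] : exists2 c : A d, predT c & 0 < marg x c.
  by apply: psumr_gt0P => [c _|]; [exact: marg_ge0 | rewrite marg_sum1 ltr01].
have recomb_gt0 : 0 < \prod_(d'' : 'I_n) (margu u x (join c am d'') / ubar u x).
  apply: prodr_gt0 => d'' _; rewrite divr_gt0 ?ubar_gt0 // margu_gt0 //.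
  have [->|ne] := eqVneq d'' d; first by rewrite join_d.
  by rewrite (join_neq c am ne); exact: (marg_gt0 (exist _ d'' ne)).
have xa : 0 < x (join c am).
  rewrite lt0r x_ge0 andbT; apply/eqP => x0; move: (x_stat (join c am)).
  rewrite /recomb_field x0 !mul0r mulr0 add0r subr0 => /eqP.
  by rewrite mulf_eq0 !gt_eqF.
rewrite /P /suppm /margm (bigD1 (join c am)) ?restr_join //=.
by apply: ltr_pwDl => //; apply: sumr_ge0 => a _; exact: x_ge0.
Qed.

Lemma prodmarg_suppm_sum1 : \sum_(am | P am) p am = 1.
Proof.
rewrite -prodmarg_sum1 (bigID P predT) /= [X in _ = _ + X]big1 ?addr0 // => am /negP nP.
apply/eqP; rewrite eq_le prodmarg_ge0 andbT leNgt; apply/negP => /prodmarg_gt0_suppm.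
exact: nP.
Qed.

Lemma uhat_cond_gt0 (y : Rest A d -> R) : psimplex x y -> 0 < uhat_cond u x ad y.
Proof.
move=> [y_ge0 y_sum1].
have [am Pam yam] : exists2 am, P am & 0 < y am by apply: psumr_gt0P; rewrite ?y_sum1.
apply: (lt_le_trans (mulr_gt0 (b_gt0 am) yam)); rewrite /uhat_cond (bigD1 am) //= lerDl.
by apply: sumr_ge0 => am' /andP[Pam' _]; rewrite mulr_ge0 ?y_ge0 // ltW ?b_gt0.
Qed.

Lemma partner_field_defect (y : Rest A d -> R) am : psimplex x y ->
  partner_field u r x ad y am = - (y am - ((1 - r) * (y am * ux u x (join ad am) /
    \sum_(am' | P am') y am' * ux u x (join ad am')) + r * p am)) * uhat_cond u x ad y.
Proof.
move=> /uhat_cond_gt0; set D := \sum_(am' | P am') _.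
have UD : uhat_cond u x ad y = D / ubar u x.
  by rewrite /uhat_cond /D mulr_suml; apply: eq_bigr => am' _; rewrite /uhat; ring.
rewrite /partner_field UD => /lt0r_neq0; rewrite mulf_eq0 negb_or => /andP[D0 _].
by rewrite /uhat /p; field; rewrite D0 gt_eqF ?ubar_gt0.
Qed.

Lemma partner_stationaryP (y : Rest A d -> R) : psimplex x y ->
  partner_stationary u r x ad y <-> stable_partner u r x ad y.
Proof.
move=> ys; have U_neq0 := lt0r_neq0 (uhat_cond_gt0 ys).
split=> [stat|[_ stable] am Pam].
  split=> // am Pam; have /eqP := stat am Pam.
  by rewrite partner_field_defect // mulf_eq0 (negbTE U_neq0) orbF oppr_eq0 subr_eq0 => /eqP.
by rewrite partner_field_defect // -(stable am Pam) subrr oppr0 mul0r.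
Qed.

Lemma constant_partner_solution (eta' : Rest A d -> R) :
  stable_partner u r x ad eta' -> partner_solution u r x ad (fun _ : R => eta').
Proof.
move=> stable am Pam; split => [|t _]; first exact: cvg_cst.
have /(partner_stationaryP (proj1 stable)) stat := stable.
by apply: (is_derive_eq (is_derive_cst (eta' am) t 1)); rewrite stat.
Qed.

Lemma exists_stable_mu : exists mu : R,
  (forall am, P am -> mu * b am < 1) /\ \sum_(am | P am) eta_mu b p r mu am = 1.
Proof.
exact: exists_mu_eta_sum1 r_gt0 r_le1 (fun am _ => b_gt0 am) suppm_prodmarg_gt0
  prodmarg_suppm_sum1.
Qed.

Section partner_equilibrium.
Variable mu : R.
Hypotheses (mub_lt1 : forall am, P am -> mu * b am < 1).
Hypothesis eta_sum1 : \sum_(am | P am) eta_mu b p r mu am = 1.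

Lemma eta_stable_partner : stable_partner u r x ad (eta_mu b p r mu).
Proof.
have eta_simplex : psimplex x (eta_mu b p r mu).
  by split=> // am Pam; exact/ltW/(eta_gt0 r_gt0 suppm_prodmarg_gt0 mub_lt1 Pam).
apply/(partner_stationaryP eta_simplex) => am Pam.
rewrite /partner_field (_ : uhat_cond u x ad _ = lambda_mu P b p r mu) //.
have := eta_eigen prodmarg_suppm_sum1 mub_lt1 eta_sum1 Pam.
rewrite /b /p => eig; lra.
Qed.

Lemma partner_solution_cvg (y : R -> Rest A d -> R) :
  partner_solution u r x ad y -> psimplex x (y 0) ->
  forall am, P am -> y t am @[t --> +oo] --> eta_mu b p r mu am.
Proof.
move=> sol [y0_ge0 y0_sum1].
apply: (partner_dynamics_cvg r_gt0 (fun am _ => b_gt0 am) suppm_prodmarg_gt0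
  prodmarg_suppm_sum1 mub_lt1 eta_sum1 _ _ y0_ge0 y0_sum1).
- by move=> am Pam; case: (sol am Pam).
- by move=> am Pam t t0; case: (sol am Pam) => _; exact.
Qed.

End partner_equilibrium.

End recombinator_partners.

Theorem mainTheorem13 (n : nat) (A : 'I_n -> finType) (R : realType)
  (u : Prof A -> Prof A -> R) (r : R) (x : Prof A -> R) (d : 'I_n) (ad : A d) :
  (2 <= n)%N ->
  (forall a a', 0 < u a a') ->
  0 < r -> r <= 1 ->
  simplex x -> recomb_stationary u r x ->
  marg x ad = 0 ->
  (forall y : Rest A d -> R, psimplex x y ->
     (partner_stationary u r x ad y <-> stable_partner u r x ad y)) /\
  exists eta : Rest A d -> R,
    stable_partner u r x ad eta /\
    (forall eta', stable_partner u r x ad eta' ->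
       forall am, suppm x am -> eta' am = eta am) /\
    (forall y : R -> Rest A d -> R,
       partner_solution u r x ad y -> psimplex x (y 0) ->
       forall am, suppm x am -> y t am @[t --> +oo] --> eta am).
Proof.
move=> _ u_gt0 r_gt0 r_le1 x_simplex x_stat _.
split=> [y|]; first exact: partner_stationaryP.
have [mu [mub_lt1 eta_sum1]] := exists_stable_mu ad u_gt0 r_gt0 r_le1 x_simplex x_stat.
have y_cvg := partner_solution_cvg u_gt0 r_gt0 x_simplex x_stat mub_lt1 eta_sum1.
exists (eta_mu (fun am => uhat u x (join ad am)) (@prodmarg _ _ _ x d) r mu); split.
  exact: (eta_stable_partner (ad := ad) u_gt0 r_gt0 x_simplex x_stat mub_lt1 eta_sum1).
split=> // eta' stable am Pam.
have := y_cvg _ (constant_partner_solution u_gt0 x_simplex stable) (proj1 stable) am Pam.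
by move=> /norm_cvg_lim <-; rewrite norm_lim_cst.
Qed.
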